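(* Let $f:\mathbb{R}\to\mathbb{R}\cup\{\pm\infty\}$ be a proper concave function such that $f(\delta)\le 0$ and $\partial f(\delta)\cap\mathbb{R}_{<0}\neq\emptyset$ for some $\delta\in\operatorname{dom}(f)$, and such that $f$ has a root or attains its maximum. Let $\delta^*:=\max\big(\{\delta: f(\delta)=0\}\cup\operatorname{argmax} f\big)$. Run the look-ahead Newton–Dinkelbach method (described in the context) on $f$ from a valid initial pair $(\delta^{(1)},g^{(1)})$. Then for every iteration $i>2$ (i.e. whenever $\delta^{(i)}$ is defined with $i\ge 3$), \[ D_f(\delta^*,\delta^{(i)}) < \tfrac12\, D_f(\delta^*,\delta^{(i-2)}). \]
   Context: For a proper concave $f$, $\operatorname{dom}(f):=\{x:-\infty<f(x)<\infty\}$ and $\partial f(x_0):=\{g: f(x)\le f(x_0)+g(x-x_0)\ \forall x\in\mathbb{R}\}$ (supergradients). Bregman divergence: for $\delta,\delta'\in\operatorname{dom}(f)$ with $\partial f(\delta)\ne\emptyset$, $D_f(\delta',\delta):=f(\delta)+\sup_{g\in\partial f(\delta)} g(\delta'-\delta)-f(\delta')$ if $\delta\ne\delta'$, and $D_f(\delta,\delta):=0$. Look-ahead Newton–Dinkelbach method (Algorithm 1): it has an oracle that, given $\delta$, returns $f(\delta)$ and, if $f(\delta)>-\infty$, some (arbitrary) $g\in\partial f(\delta)$. Input: $\delta^{(1)}\in\operatorname{dom}(f)$ and $g^{(1)}\in\partial f(\delta^{(1)})$ with $f(\delta^{(1)})\le 0$ and $g^{(1)}<0$. For $i=1,2,\dots$: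 if $f(\delta^{(i)})=0$, return $\delta^{(i)}$. Otherwise set $\delta:=\delta^{(i)}-f(\delta^{(i)})/g^{(i)}$ and query $g\in\partial f(\delta)$; if $f(\delta)=-\infty$, or $f(\delta)<0$ and $g\ge 0$, return NO ROOT. Then set $\delta':=2\delta-\delta^{(i)}$ and query $g'\in\partial f(\delta')$; if $-\infty<f(\delta')<0$ and $g'<0$, replace $(\delta,g)$ by $(\delta',g')$. Set $\delta^{(i+1)}:=\delta$, $g^{(i+1)}:=g$. ''Iteration $i$'' is the iteration starting with the current pair $(\delta^{(i)},g^{(i)})$. *)

From HB Require Import structures.
From mathcomp Require Import all_boot all_order all_algebra.
From mathcomp Require Import all_classical all_reals ereal.
Set Implicit Arguments. Unset Strict Implicit. Unset Printing Implicit Defensive.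
Import Order.TTheory GRing.Theory Num.Theory.
Local Open Scope classical_set_scope.
Local Open Scope ring_scope.

Section Defs.
Variable R : realType.
Implicit Types (f : R -> \bar R) (x y t g : R).

Definition in_dom f x : Prop := f x \is a fin_num.

Definition proper_fun f : Prop :=
  (forall x, f x != +oo%E) /\ (exists x, in_dom f x).

(* concavity (hypograph convex); for a proper f it suffices to test points
   of the domain *)
Definition concave_fun f : Prop :=
  forall x y t, in_dom f x -> in_dom f y -> (0 < t < 1)%R ->
    (t%:E * f x + (1 - t)%R%:E * f y <= f (t * x + (1 - t) * y)%R)%E.

Definition supergrad f x0 g : Prop :=
  forall x, (f x <= f x0 + (g * (x - x0))%R%:E)%E.

Definition is_root f x : Prop := f x = 0%E.
Definition is_argmax f x : Prop := forall y, (f y <= f x)%E.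

Definition bregman f (d' d : R) : \bar R :=
  if d' == d then 0%E
  else (f d + ereal_sup [set (g * (d' - d))%R%:E | g in supergrad f d] - f d')%E.

(* The oracle answers
   (gn at the Newton point, gl at the look-ahead point) are arbitrary
   supergradients. *)
Definition landn_step f (d gd d' gd' : R) : Prop :=
  f d <> 0%E /\
  let dn := d - fine (f d) / gd in
  exists gn, in_dom f dn /\ supergrad f dn gn /\
    ~ (fine (f dn) < 0 /\ 0 <= gn) /\
    let dl := 2 * dn - d in
    exists gl, (in_dom f dl -> supergrad f dl gl) /\
      ((in_dom f dl /\ fine (f dl) < 0 /\ gl < 0 /\ d' = dl /\ gd' = gl) \/
       (~ (in_dom f dl /\ fine (f dl) < 0 /\ gl < 0) /\ d' = dn /\ gd' = gn)).

End Defs.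

From HB Require Import structures.
From mathcomp Require Import all_boot all_order all_algebra.
From mathcomp Require Import all_classical all_reals ereal.
From mathcomp Require Import ring lra.
Import Order.TTheory GRing.Theory Num.Theory.
Local Open Scope classical_set_scope.
Local Open Scope ring_scope.

(* Write [F := fine \o f] and, for a supergradient [g] at [x],
   [l x g := F x + g (ds - x) - F ds], a lower bound for [D_f(ds, x)].
   Every iterate satisfies [ds <= x] and [F x <= 0] and, until the run
   stops, carries a negative supergradient.  If the look-ahead point [A] of
   a step from [x] is rejected then [A <= ds] (otherwise an intermediate value argument for the
   concave [f] yields a root right of [ds]), whence [l x g <= - F x - F ds];
   if it is accepted, every supergradient at [A] is at least [g / 2].  Either
   way the new iterate [x'] satisfies
   [D_f(ds, x') <= F x' + min (l x g) ((l x g - F x - F ds) / 2)],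
   and chaining two steps gives
   [D_f(ds, x'') <= F x'' + (l x g - F ds) / 2 < l x g / 2 <= D_f(ds, x) / 2]
   unless [x'' = ds], where [D_f(ds, x'') = 0]. *)

Definition newton_point {R : realType} (f : R -> \bar R) (x g : R) :=
  x - fine (f x) / g.

Definition lin_gap {R : realType} (f : R -> \bar R) (ds x g : R) :=
  fine (f x) + g * (ds - x) - fine (f ds).

Definition good_pair {R : realType} (f : R -> \bar R) (ds x g : R) :=
  [/\ in_dom f x, supergrad f x g, fine (f x) <= 0, ds <= x &
      (fine (f x) < 0 -> g < 0)].

Section ConcaveFacts.
Context {R : realType} {f : R -> \bar R}.
Hypotheses (hproper : proper_fun f) (hconc : concave_fun f).
Implicit Types a b c g x y z : R.

Lemma supergrad_fine {x y g} : in_dom f x -> in_dom f y -> supergrad f x g ->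
  fine (f y) <= fine (f x) + g * (y - x).
Proof. by move=> /fineK fx /fineK fy /(_ y); rewrite -fx -fy -EFinD lee_fin. Qed.

Lemma concave_chord {a b z} : in_dom f a -> in_dom f b -> a < z < b ->
  in_dom f z /\ (b - z) * fine (f a) + (z - a) * fine (f b) <= (b - a) * fine (f z).
Proof.
move=> da db /andP[az zb]; have ba : 0 < b - a by lra.
pose t := (b - z) / (b - a).
have t01 : 0 < t < 1 by rewrite divr_gt0 ?ltr_pdivrMr //=; lra.
have tz : t * a + (1 - t) * b = z by rewrite /t; field; lra.
have chord : (b - z) * fine (f a) + (z - a) * fine (f b)
             = (b - a) * (t * fine (f a) + (1 - t) * fine (f b)).
  by rewrite /t; field; lra.
have := hconc _ _ _ da db t01; rewrite tz -(fineK da) -(fineK db) -!EFinM -EFinD.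
case Ez : (f z) => [r| |] hle.
- split; first by rewrite /in_dom Ez.
  by rewrite /= chord; apply: ler_wpM2l; [exact: ltW | rewrite -lee_fin].
- by have := hproper.1 z; rewrite Ez.
- by move: hle; rewrite leeNy_eq.
Qed.

Lemma in_dom_segment {a b z} : in_dom f a -> in_dom f b -> a <= z <= b ->
  in_dom f z.
Proof.
move=> da db /andP[]; rewrite !le_eqVlt => /predU1P[<- //|az] /predU1P[-> //|zb].
by case: (concave_chord da db (introT andP (conj az zb))).
Qed.

Lemma concave_chord_root {a b} : a < b -> in_dom f a -> in_dom f b ->
  0 < fine (f a) -> fine (f b) < 0 -> exists2 z, a < z < b & 0 <= fine (f z).
Proof.
move=> ab da db fa0 fb0.
pose t := fine (f a) / (fine (f a) - fine (f b)).
have t01 : 0 < t < 1 by rewrite divr_gt0 ?ltr_pdivrMr //=; lra.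
pose z := a + t * (b - a).
have azb : a < z < b by apply/andP; split; rewrite /z; nra.
have [_] := concave_chord da db azb.
have -> : (b - z) * fine (f a) + (z - a) * fine (f b) = 0 by rewrite /z /t; field; lra.
by rewrite pmulr_rge0 ?subr_gt0 // => ?; exists z.
Qed.

Lemma concave_ge0_left_limit {c b} : c < b -> in_dom f c -> in_dom f b ->
  fine (f b) < 0 ->
  (forall e, 0 < e -> exists2 z, c - e < z <= c & in_dom f z /\ 0 <= fine (f z)) ->
  0 <= fine (f c).
Proof.
move=> cb dc db fb0 approx; rewrite leNgt; apply/negP => fc0.
pose e := (b - c) * fine (f c) / fine (f b).
have eb : e * fine (f b) = (b - c) * fine (f c) by rewrite /e divfK // lt_eqF.
have e0 : 0 < e by nra.
have [z /andP[ez]] := approx e e0.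
rewrite le_eqVlt => /predU1P[-> [_] | zc [dz fz0]]; first lra.
have [_ chord] := concave_chord dz db (introT andP (conj zc cb)).
nra.
Qed.

Lemma concave_ivt {a b g} : a < b -> in_dom f a -> in_dom f b ->
  0 <= fine (f a) -> fine (f b) < 0 -> supergrad f b g ->
  exists2 r, a <= r < b & f r = 0%E.
Proof.
move=> ab da db fa0 fb0 sgb.
pose S := [set z | a <= z <= b /\ 0 <= fine (f z)].
have domS z : S z -> in_dom f z by case=> /(in_dom_segment da db).
have Sa : S a by split; rewrite // lexx ltW.
have g0 : g < 0 by have := supergrad_fine db da sgb; nra.
have ubS : ubound S (b - fine (f b) / g).
  move=> z Sz; have := supergrad_fine db (domS z Sz) sgb.
  have : fine (f b) / g * g = fine (f b) by rewrite divfK // lt_eqF.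
  by case: Sz => _; nra.
have hS : has_sup S by split; [exists a | exists (b - fine (f b) / g)].
pose c := sup S.
have ac : a <= c := sup_upper_bound hS Sa.
have cb : c < b.
  apply: le_lt_trans (ge_sup _ ubS) _; first by exists a.
  by rewrite ltrBlDl ltrDr -mulrNN -invrN divr_gt0 ?oppr_gt0.
have dc : in_dom f c by apply: (in_dom_segment da db); rewrite ac ltW.
have fc_ge0 : 0 <= fine (f c).
  apply: (concave_ge0_left_limit cb dc db fb0) => e e0.
  have [z Sz ez] := sup_adherent e0 hS.
  by exists z; [rewrite ez sup_upper_bound | split; [apply: domS | case: Sz]].
have fc_le0 : fine (f c) <= 0.
  rewrite leNgt; apply/negP => fc0.
  have [z /andP[cz zb] fz0] := concave_chord_root cb dc db fc0 fb0.
  have : z <= c by apply: (sup_upper_bound hS); split; [apply/andP; split|]; lra.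
  lra.
exists c; first by rewrite ac.
by rewrite -(fineK dc); congr (_%:E); apply/eqP; rewrite eq_le fc_le0.
Qed.

Lemma newton_point_eq x {g} : g != 0 -> g * (x - newton_point f x g) = fine (f x).
Proof. by move=> gn0; rewrite /newton_point; field. Qed.

Lemma newton_point_lt {x g} : g < 0 -> fine (f x) < 0 -> newton_point f x g < x.
Proof. by move=> g0 fx0; have := newton_point_eq x (ltr0_neq0 g0); nra. Qed.

Section Dstar.
Context {ds : R}.
Hypothesis hstar : is_root f ds \/ is_argmax f ds.
Hypothesis hmax : forall x, is_root f x \/ is_argmax f x -> x <= ds.

Lemma dstar_in_dom : in_dom f ds.
Proof.
rewrite /in_dom; case: hstar => [-> //|ds_max]; have [finf [y dy]] := hproper.
case E : (f ds) => [//| |]; first by have := finf ds; rewrite E.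
by have := ds_max y; rewrite E leeNy_eq -(fineK dy).
Qed.

Lemma fine_le_dstar {y} : in_dom f y -> fine (f y) <= 0 -> fine (f y) <= fine (f ds).
Proof.
case: hstar => [ds0|ds_max] dy fy0; first by rewrite ds0.
by have := ds_max y; rewrite -(fineK dy) -(fineK dstar_in_dom) lee_fin.
Qed.

Lemma fine_lt0_right_of_dstar {y} : in_dom f y -> ds < y -> fine (f y) <= 0 ->
  fine (f y) < 0.
Proof.
move=> dy dsy; rewrite le_eqVlt => /predU1P[fy0|//].
have : y <= ds by apply: hmax; left; rewrite /is_root -(fineK dy) fy0.
lra.
Qed.

Lemma fine_lt_right_of_dstar {y x g} : ds < y -> y < x -> in_dom f y -> in_dom f x ->
  fine (f x) < 0 -> supergrad f x g ->
  fine (f y) < 0 /\ fine (f y) < fine (f ds).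
Proof.
move=> dsy yx dy dx fx0 sgx.
have fy0 : fine (f y) < 0.
  rewrite ltNge; apply/negP => fy0.
  have [r /andP[yr rx] fr0] := concave_ivt yx dy dx fy0 fx0 sgx.
  have : r <= ds by apply: hmax; left.
  lra.
split=> //; case: hstar => [ds0|ds_max]; first by rewrite ds0.
rewrite lt_neqAle fine_le_dstar ?ltW // andbT; apply/negP => /eqP fyds.
have : y <= ds.
  apply: hmax; right => z; rewrite -(fineK dy) fyds fineK ?dstar_in_dom //.
lra.
Qed.

Lemma dstar_le_supergrad_lt0 {y g} : in_dom f y -> fine (f y) <= 0 ->
  supergrad f y g -> g < 0 -> ds <= y.
Proof.
move=> dy fy0 sgy g0; rewrite leNgt; apply/negP => yds.
have := supergrad_fine dy dstar_in_dom sgy; have := fine_le_dstar dy fy0.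
nra.
Qed.

Lemma lin_gap_ge0 {x g} : in_dom f x -> supergrad f x g -> 0 <= lin_gap f ds x g.
Proof.
by move=> dx sgx; have := supergrad_fine dx dstar_in_dom sgx; rewrite /lin_gap; lra.
Qed.

Lemma lin_gap_le_bregman {x g} : in_dom f x -> supergrad f x g ->
  ((lin_gap f ds x g)%:E <= bregman f ds x)%E.
Proof.
move=> dx sgx; rewrite /bregman /lin_gap; case: eqP => [->|_].
  by rewrite subrr mulr0 addr0 subrr.
rewrite -(fineK dx) -(fineK dstar_in_dom) !EFinB EFinD.
by apply: leeB => //; apply: leeD => //; apply: ereal_sup_ubound; exists g.
Qed.

Lemma bregman_le_lin_gap {y c} : in_dom f y -> ds <= y ->
  (forall g, supergrad f y g -> c <= g) -> (bregman f ds y <= (lin_gap f ds y c)%:E)%E.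
Proof.
move=> dy dsy c_le; rewrite /bregman /lin_gap; case: eqP => [->|_].
  by rewrite subrr mulr0 addr0 subrr.
rewrite -(fineK dy) -(fineK dstar_in_dom) !EFinB EFinD.
apply: leeB => //; apply: leeD => //; apply: ge_ereal_sup => _ [g sgy <-].
by rewrite lee_fin; have := c_le g sgy; nra.
Qed.

Lemma good_pair_init {x g} : in_dom f x -> supergrad f x g -> (f x <= 0)%E -> g < 0 ->
  good_pair f ds x g.
Proof.
move=> dx sgx; rewrite -(fineK dx) lee_fin => fx0 g0.
by split=> //; apply: (dstar_le_supergrad_lt0 dx).
Qed.

Lemma good_pair_fine_lt0 {x g x' g'} : good_pair f ds x g -> landn_step f x g x' g' ->
  fine (f x) < 0.
Proof.
case=> dx _ fx0 _ _ [fxn0 _]; rewrite lt_neqAle fx0 andbT.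
by apply/eqP => fx; apply: fxn0; rewrite -(fineK dx) fx.
Qed.

Lemma newton_fine_le0 {x g} : in_dom f x -> supergrad f x g -> g < 0 ->
  in_dom f (newton_point f x g) -> fine (f (newton_point f x g)) <= 0.
Proof.
move=> dx sgx g0 dN; have := supergrad_fine dx dN sgx.
by have := newton_point_eq x (ltr0_neq0 g0); lra.
Qed.

Lemma dstar_le_newton {x g gn} : in_dom f x -> supergrad f x g -> g < 0 ->
  in_dom f (newton_point f x g) -> supergrad f (newton_point f x g) gn ->
  ~ (fine (f (newton_point f x g)) < 0 /\ 0 <= gn) -> ds <= newton_point f x g.
Proof.
move=> dx sgx g0 dN sgN accept; have fN0 := newton_fine_le0 dx sgx g0 dN.
have [fNlt0|fNge0] := ltP (fine (f (newton_point f x g))) 0.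
  apply: (dstar_le_supergrad_lt0 dN fN0 sgN); rewrite ltNge; apply/negP => gn0.
  exact: accept.
rewrite leNgt; apply/negP => Nds.
have := fine_le_dstar dN fN0; have := supergrad_fine dx dstar_in_dom sgx.
by have := newton_point_eq x (ltr0_neq0 g0); nra.
Qed.

Lemma bregman_newton {x g} : in_dom f x -> supergrad f x g -> g < 0 ->
  fine (f x) < 0 -> in_dom f (newton_point f x g) -> ds <= newton_point f x g ->
  (bregman f ds (newton_point f x g) <=
     (fine (f (newton_point f x g)) + lin_gap f ds x g)%:E)%E.
Proof.
move=> dx sgx g0 fx0 dN dsN.
have Neq := newton_point_eq x (ltr0_neq0 g0); have Nx := newton_point_lt g0 fx0.
apply: le_trans (bregman_le_lin_gap dN dsN (c := g) _) _.
  move=> g' sgN; have := supergrad_fine dN dx sgN.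
  have := newton_fine_le0 dx sgx g0 dN; nra.
rewrite lee_fin /lin_gap; lra.
Qed.

Lemma lookahead_le_dstar {x g gl} : in_dom f x -> supergrad f x g -> g < 0 ->
  fine (f x) < 0 ->
  let A := 2 * newton_point f x g - x in
  (in_dom f A -> supergrad f A gl) -> ~ (in_dom f A /\ fine (f A) < 0 /\ gl < 0) ->
  A <= ds.
Proof.
move=> dx sgx g0 fx0 A sgA reject; rewrite leNgt; apply/negP => dsA.
have Ax : A < x by have := newton_point_lt g0 fx0; rewrite /A; lra.
have dA : in_dom f A.
  by apply: (in_dom_segment dstar_in_dom dx); rewrite (ltW dsA) (ltW Ax).
have [fA0 fAds] := fine_lt_right_of_dstar dsA Ax dA dx fx0 sgx.
apply: reject; do 2 split=> //.
have := supergrad_fine dA dstar_in_dom (sgA dA); nra.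
Qed.

Lemma lin_gap_le_lookahead {x g} : g < 0 -> 2 * newton_point f x g - x <= ds ->
  lin_gap f ds x g <= - fine (f x) - fine (f ds).
Proof.
by move=> g0 Ads; have := newton_point_eq x (ltr0_neq0 g0); rewrite /lin_gap; nra.
Qed.

Lemma bregman_lookahead {x g gl} : in_dom f x -> supergrad f x g -> g < 0 ->
  fine (f x) < 0 ->
  let A := 2 * newton_point f x g - x in
  in_dom f A -> supergrad f A gl -> fine (f A) < 0 -> ds <= A ->
  (bregman f ds A <=
     (fine (f A) + (lin_gap f ds x g + fine (f x) - fine (f ds)) / 2)%:E)%E.
Proof.
move=> dx sgx g0 fx0 A dA sgA fA0 dsA.
have Neq := newton_point_eq x (ltr0_neq0 g0); have Nx := newton_point_lt g0 fx0.
apply: le_trans (bregman_le_lin_gap dA dsA (c := g / 2) _) _.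
  by move=> g' sgA'; have := supergrad_fine dA dx sgA'; rewrite /A; nra.
by rewrite lee_fin /lin_gap /A; lra.
Qed.

Lemma good_pair_step {x g x' g'} : good_pair f ds x g -> landn_step f x g x' g' ->
  [/\ good_pair f ds x' g',
      (bregman f ds x' <= (fine (f x') + lin_gap f ds x g)%:E)%E &
      (bregman f ds x' <=
         (fine (f x') + (lin_gap f ds x g - fine (f x) - fine (f ds)) / 2)%:E)%E].
Proof.
move=> good step; have fx0 := good_pair_fine_lt0 good step.
case: good => dx sgx _ _ /(_ fx0) g0.
have gap0 := lin_gap_ge0 dx sgx; have fxds := fine_le_dstar dx (ltW fx0).
case: step => _ /=; rewrite -/(newton_point f x g).
move=> [gn [dN [sgN [accept [gl [sgA [[dA [fA0 [gl0 [-> ->]]]]|[reject [-> ->]]]]]]]]].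
- have dsA := dstar_le_supergrad_lt0 dA (ltW fA0) (sgA dA) gl0.
  have B := bregman_lookahead dx sgx g0 fx0 dA (sgA dA) fA0 dsA.
  split; first exact: (And5 dA (sgA dA) (ltW fA0) dsA (fun=> gl0)).
  + by apply: le_trans B _; rewrite lee_fin; lra.
  + by apply: le_trans B _; rewrite lee_fin; lra.
- have dsN := dstar_le_newton dx sgx g0 dN sgN accept.
  have B := bregman_newton dx sgx g0 fx0 dN dsN.
  have := lin_gap_le_lookahead g0 (lookahead_le_dstar dx sgx g0 fx0 sgA reject).
  move=> gap_le; split=> //; last by apply: le_trans B _; rewrite lee_fin; lra.
  split=> //; first exact: newton_fine_le0 dx sgx g0 dN.
  by move=> fN0; rewrite ltNge; apply/negP => gn0; apply: accept.
Qed.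

Lemma bregman_two_steps {x0 g0 x1 g1 x2 g2} : good_pair f ds x0 g0 ->
  landn_step f x0 g0 x1 g1 -> landn_step f x1 g1 x2 g2 ->
  (bregman f ds x2 < (2^-1)%:E * bregman f ds x0)%E.
Proof.
move=> good0 step01 step12.
have [good1 B1 _] := good_pair_step good0 step01.
have [[dx2 _ fx2 dsx2 _] _ B2] := good_pair_step good1 step12.
have fx1 := good_pair_fine_lt0 good1 step12.
have [dx0 sgx0 _ _ _] := good0; have [dx1 sgx1 _ _ _] := good1.
have gap1 : lin_gap f ds x1 g1 <= fine (f x1) + lin_gap f ds x0 g0.
  by rewrite -lee_fin; apply: le_trans (lin_gap_le_bregman dx1 sgx1) B1.
have gap0 : 0 < lin_gap f ds x0 g0 by have := lin_gap_ge0 dx1 sgx1; lra.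
apply: (@lt_le_trans _ _ (lin_gap f ds x0 g0 / 2)%:E).
  have [<-|x2_ne] := eqVneq ds x2; first by rewrite /bregman eqxx lte_fin; lra.
  have x2_gt : ds < x2 by rewrite lt_neqAle x2_ne dsx2.
  have := fine_lt0_right_of_dstar dx2 x2_gt fx2; have := fine_le_dstar dx2 fx2.
  by move=> *; apply: le_lt_trans B2 _; rewrite lte_fin; lra.
rewrite mulrC EFinM; apply: lee_wpmul2l => //; exact: lin_gap_le_bregman dx0 sgx0.
Qed.

End Dstar.
End ConcaveFacts.

Theorem lemma3p4 (R : realType) (f : R -> \bar R)
  (hproper : proper_fun f) (hconc : concave_fun f)
  (hneg : exists d, in_dom f d /\ (f d <= 0)%E /\ exists g, supergrad f d g /\ g < 0)
  (hroot : (exists x, is_root f x) \/ (exists x, is_argmax f x))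
  (dstar : R)
  (hdstar : (is_root f dstar \/ is_argmax f dstar) /\
            forall x, is_root f x \/ is_argmax f x -> x <= dstar)
  (delta gam : nat -> R) (n : nat)
  (hinit_dom : in_dom f (delta 1%N))
  (hinit_g : supergrad f (delta 1%N) (gam 1%N))
  (hinit_f : (f (delta 1%N) <= 0)%E) (hinit_neg : gam 1%N < 0)
  (hrun : forall i : nat, (1 <= i)%N -> (i < n)%N ->
            landn_step f (delta i) (gam i) (delta i.+1) (gam i.+1)) :
  forall i : nat, (3 <= i)%N -> (i <= n)%N ->
    (bregman f dstar (delta i) < (2^-1)%:E * bregman f dstar (delta (i - 2)%N))%E.
Proof.
(* [hneg] and [hroot] are implied by the initial pair and [hdstar]. *)
have [hstar hmax] := hdstar.
have good k : (1 <= k <= n)%N -> good_pair f dstar (delta k) (gam k).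
  elim: k => [//|[_ _|k IH /andP[_ kn]]].
    exact: (good_pair_init hproper hstar hinit_dom hinit_g hinit_f hinit_neg).
  have [] := good_pair_step hproper hconc hstar hmax (IH _) (hrun k.+1 isT kn) => //.
  by rewrite /= ltnW.
case=> [|[|i]] // i1 i_n; rewrite !ltnS in i1; rewrite !subSS subn0.
have i_n' : (i < n)%N by rewrite ltnW.
apply: (bregman_two_steps hproper hconc hstar hmax (good i _)).
- by rewrite i1 ltnW.
- exact: hrun i i1 i_n'.
- exact: hrun i.+1 isT i_n.
Qed.
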